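(* Let $G$ be a locally compact group, $K$ a compact subgroup of $G$, and $\omega$ a $K$-bi-invariant weight on $G$ with $\omega(e) = 1$. If $(G, K, \omega)$ is a weighted Gelfand pair, then for every $f \in C_c(K\setminus G/K)$, $$\int_G f(x)\,\omega(x)\,\omega(x^{-1})\,dx = \int_G f(x^{-1})\,\omega(x^{-1})\,\omega(x)\,dx.$$
   Context: A weight on $G$ is a continuous function $\omega: G \to (0,\infty)$; it is $K$-bi-invariant if $\omega(k_1 x k_2)=\omega(x)$ for all $x\in G$, $k_1,k_2\in K$. $e$ is the identity of $G$. Integration on $G$ is with respect to a fixed left Haar measure. The weighted convolution is $(f \ast_\omega g)(x) = \int_G f(y) g(y^{-1}x) \frac{\omega(y)\omega(y^{-1}x)}{\omega(x)}\,dy$. $\mathcal{L}^1_\omega(K\setminus G/K)$ is the space of (classes of) measurable $K$-bi-invariant $f:G\to\mathbb{C}$ with $\int_G|f|\omega<\infty$. $(G,K,\omega)$ is a weighted Gelfand pair if $(\mathcal{L}^1_\omega(K\setminus G/K),\ast_\omega)$ is commutative. $C_c(K\setminus G/K)$ is the space of continuous compactly supported $K$-bi-invariant complex functions on $G$. *)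

From HB Require Import structures.
From mathcomp Require Import all_boot all_order all_algebra.
From mathcomp Require Import all_classical all_reals all_analysis.
From mathcomp Require Import complex.

Set Implicit Arguments.
Unset Strict Implicit.
Unset Printing Implicit Defensive.

Import Order.TTheory GRing.Theory Num.Theory.
Import numFieldNormedType.Exports.

Local Open Scope classical_set_scope.
Local Open Scope ring_scope.
Local Open Scope complex_scope.

Definition borel (G : ptopologicalType) := g_sigma_algebraType (@open G).

Definition is_lc_group (G : ptopologicalType)
  (mul : G -> G -> G) (inv : G -> G) (e : G) : Prop :=
  (forall x y z, mul x (mul y z) = mul (mul x y) z) /\
  (forall x, mul e x = x /\ mul x e = x) /\
  (forall x, mul (inv x) x = e /\ mul x (inv x) = e) /\
  continuous (fun p : G * G => mul p.1 p.2) /\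
  continuous inv /\
  hausdorff_space G /\
  locally_compact [set: G].

Definition is_compact_subgroup (G : ptopologicalType)
  (mul : G -> G -> G) (inv : G -> G) (e : G) (K : set G) : Prop :=
  compact K /\ K e /\ (forall a b, K a -> K b -> K (mul a b)) /\
  (forall a, K a -> K (inv a)).

Definition is_left_Haar (R : realType) (G : ptopologicalType)
  (mul : G -> G -> G) (mu : {measure set (borel G) -> \bar R}) : Prop :=
  (forall (x : G) (A : set (borel G)), measurable A ->
      mu [set mul x a | a in A] = mu A) /\
  (forall C : set G, compact C -> (mu C < +oo)%E) /\
  (forall A : set (borel G), measurable A ->
      mu A = ereal_inf [set mu U | U in [set U : set G | open U /\ A `<=` U]]) /\
  (forall U : set G, open U ->
      mu U = ereal_sup [set mu C | C in [set C : set G | compact C /\ C `<=` U]]) /\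
  (exists U : set G, open U /\ (0 < mu U)%E).

Definition bi_invariant (G : Type) (T : Type) (mul : G -> G -> G) (K : set G)
  (f : G -> T) : Prop :=
  forall x k1 k2, K k1 -> K k2 -> f (mul k1 (mul x k2)) = f x.

Definition is_weight (R : realType) (G : ptopologicalType) (w : G -> R) : Prop :=
  continuous w /\ forall x, 0 < w x.

Definition Cintegral (R : realType) (G : ptopologicalType)
  (mu : {measure set (borel G) -> \bar R}) (h : G -> R[i]) : R[i] :=
  ((Rintegral mu setT (fun x : borel G => complex.Re (h x)))%:C +
   'i%C * (Rintegral mu setT (fun x : borel G => complex.Im (h x)))%:C)%R.

Definition wconv (R : realType) (G : ptopologicalType)
  (mu : {measure set (borel G) -> \bar R}) (mul : G -> G -> G) (inv : G -> G)
  (w : G -> R) (f g : G -> R[i]) (x : G) : R[i] :=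
  Cintegral mu (fun y => f y * g (mul (inv y) x) *
                         ((w y * w (mul (inv y) x)) / w x)%:C).

(* f is (a representative of) an element of L^1_w(K\G/K):
   measurable, K-bi-invariant, and int_G |f| w < oo. *)
Definition in_L1w_biinv (R : realType) (G : ptopologicalType)
  (mu : {measure set (borel G) -> \bar R}) (mul : G -> G -> G) (K : set G)
  (w : G -> R) (f : G -> R[i]) : Prop :=
  measurable_fun setT (fun x : borel G => complex.Re (f x)) /\
  measurable_fun setT (fun x : borel G => complex.Im (f x)) /\
  bi_invariant mul K f /\
  (\int[mu]_x (Normc.normc (f x) * w x)%:E < +oo)%E.

(* (G, K, w) is a weighted Gelfand pair: convolution on L^1_w(K\G/K) is
   commutative (as classes, i.e. up to mu-null sets). *)
Definition weighted_Gelfand_pair (R : realType) (G : ptopologicalType)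
  (mu : {measure set (borel G) -> \bar R}) (mul : G -> G -> G) (inv : G -> G)
  (K : set G) (w : G -> R) : Prop :=
  forall f g : G -> R[i],
    in_L1w_biinv mu mul K w f -> in_L1w_biinv mu mul K w g ->
    {ae mu, forall x : borel G, wconv mu mul inv w f g x = wconv mu mul inv w g f x}.

Definition in_Cc_biinv (R : realType) (G : ptopologicalType)
  (mul : G -> G -> G) (K : set G) (f : G -> R[i]) : Prop :=
  continuous (fun x => complex.Re (f x)) /\ continuous (fun x => complex.Im (f x)) /\
  (exists C : set G, compact C /\ forall x, ~ C x -> f x = 0%R) /\
  bi_invariant mul K f.

(* Applying the argument to the real and imaginary parts of f, it suffices to
   treat a real-valued u in C_c(K\G/K), supported in a compact set S.  Write
   k(y, x) = w(y) w(y^-1 x) / w(x) for the kernel of the weighted convolution.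
   Choose a compact neighbourhood V of e and a compact K-bi-invariant set Om so
   large that, for x in V, 1_Om(y^-1 x) = 1 whenever u(y) <> 0 and 1_Om(y) = 1
   whenever u(y^-1 x) <> 0 (Om = K M M K with M = S u S^-1 u V will do).
   Then for x in V

     (u *_w 1_Om)(x) = int u(y) k(y, x) dy,
     (1_Om *_w u)(x) = int u(y^-1 x) k(y, x) dy,

   and both right-hand sides are continuous in x.  As u and 1_Om lie in
   L^1_w(K\G/K), the two convolutions agree almost everywhere; since nonempty
   open sets have positive Haar measure, functions continuous at e that agree
   almost everywhere agree at e.  As w(e) = 1, the values at e are the two
   sides of the identity. *)

From HB Require Import structures.
From mathcomp Require Import all_boot all_order all_algebra.
From mathcomp Require Import all_classical all_reals all_analysis.
From mathcomp Require Import complex.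
From mathcomp Require Import ring.

Import Order.TTheory GRing.Theory Num.Theory.
Import numFieldNormedType.Exports.
Local Open Scope classical_set_scope.
Local Open Scope ring_scope.

Definition group_laws {G : Type} (mul : G -> G -> G) (inv : G -> G) (e : G) :=
  [/\ associative mul, left_id e mul, right_id e mul,
      left_inverse e inv mul & right_inverse e inv mul].

Lemma lc_group_laws {G : ptopologicalType} {mul : G -> G -> G} {inv : G -> G} {e : G} :
  is_lc_group mul inv e -> group_laws mul inv e.
Proof.
case=> mulA [mul1 [mulV _]].
by split=> // x; [case: (mul1 x) | case: (mul1 x) | case: (mulV x) | case: (mulV x)].
Qed.

Section GroupLaws.
Context {G : Type} {mul : G -> G -> G} {inv : G -> G} {e : G}.
Hypothesis gG : group_laws mul inv e.

Lemma grp_mulA : associative mul. Proof. by case: gG. Qed.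
Lemma grp_mul1g : left_id e mul. Proof. by case: gG. Qed.
Lemma grp_mulg1 : right_id e mul. Proof. by case: gG. Qed.
Lemma grp_mulVg : left_inverse e inv mul. Proof. by case: gG. Qed.
Lemma grp_mulgV : right_inverse e inv mul. Proof. by case: gG. Qed.

Lemma grp_mulKg x y : mul (inv x) (mul x y) = y.
Proof. by rewrite grp_mulA grp_mulVg grp_mul1g. Qed.

Lemma grp_mulKVg x y : mul x (mul (inv x) y) = y.
Proof. by rewrite grp_mulA grp_mulgV grp_mul1g. Qed.

Lemma grp_mulgK x y : mul (mul x y) (inv y) = x.
Proof. by rewrite -grp_mulA grp_mulgV grp_mulg1. Qed.

Lemma grp_mulgVK x y : mul (mul x (inv y)) y = x.
Proof. by rewrite -grp_mulA grp_mulVg grp_mulg1. Qed.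

Lemma grp_invgK x : inv (inv x) = x.
Proof. by rewrite -[LHS]grp_mulg1 -(grp_mulVg x) grp_mulA grp_mulVg grp_mul1g. Qed.

Lemma grp_invMg x y : inv (mul x y) = mul (inv y) (inv x).
Proof.
have xyV : mul (mul x y) (mul (inv y) (inv x)) = e.
  by rewrite -grp_mulA grp_mulKVg grp_mulgV.
by rewrite -[LHS]grp_mulg1 -xyV grp_mulKg.
Qed.

End GroupLaws.

Section BorelMeasurable.
Context {T : ptopologicalType}.

Lemma open_measurable_borel (U : set T) : open U -> measurable (U : set (borel T)).
Proof. exact: sub_sigma_algebra. Qed.

Lemma closed_measurable_borel (U : set T) :
  closed U -> measurable (U : set (borel T)).
Proof.
move=> cU; rewrite -[U]setCK; apply: measurableC.
by apply: open_measurable_borel; rewrite openC.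
Qed.

Lemma compact_measurable_borel (C : set T) :
  hausdorff_space T -> compact C -> measurable (C : set (borel T)).
Proof. by move=> hT cC; apply: closed_measurable_borel; exact: compact_closed. Qed.

Lemma continuous_measurable_borel (R : realType) (h : T -> R) :
  continuous h -> measurable_fun setT (h : borel T -> R).
Proof.
move=> /continuousP ch.
apply: (measurability _ (measurable_realfun.RGenOpens.measurableE R)).
move=> _ [_ [a [b ->] <-]]; rewrite setTI.
by apply: open_measurable_borel; apply: ch; exact: interval_open.
Qed.

End BorelMeasurable.

Lemma continuous_fst {X Y : topologicalType} : continuous (@fst X Y).
Proof. by move=> [x y]; exact: cvg_fst. Qed.

Lemma continuous_snd {X Y : topologicalType} : continuous (@snd X Y).
Proof. by move=> [x y]; exact: cvg_snd. Qed.

Lemma continuous_section {X Y Z : topologicalType} {f : X * Y -> Z} (y : Y) :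
  continuous f -> continuous (fun x => f (x, y)).
Proof.
move=> cf x; apply: (continuous_comp (f := fun x => (x, y))) (cf _).
exact: cvg_pair cvg_id (cvg_cst _).
Qed.

Lemma near_eq_continuous_at {T U : topologicalType} {f g : T -> U} {x0 : T} :
  (\forall x \near x0, f x = g x) -> {for x0, continuous g} -> {for x0, continuous f}.
Proof.
move=> fg cg; rewrite /prop_for /continuous_at (nbhs_singleton fg).
apply: cvg_trans cg; exact: near_eq_cvg (filterS (fun x fx => esym fx) fg).
Qed.

Lemma near_unif_compact_section {R : realType} {T X : topologicalType}
    (Psi : T * X -> R) (L : set T) (x0 : X) (eps : R) :
  continuous Psi -> compact L -> 0 < eps ->
  \forall x \near x0, L `<=` [set y | `|Psi (y, x0) - Psi (y, x)| < eps].
Proof.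
move=> cPsi /compact_near_coveringP cL eps0; apply: cL => y0 _.
have eps20 : 0 < eps / 2 by rewrite divr_gt0.
case: (cvgr_dist_lt _ _ (cPsi (y0, x0)) _ eps20) => -[A B] /= [nA nB] AB.
exists (A, B) => // -[y x] /= [Ay Bx].
have near_x0 := AB (y, x0) (conj Ay (nbhs_singleton nB)).
have near_x := AB (y, x) (conj Ay Bx).
rewrite (splitr eps); apply: le_lt_trans (ler_distD (Psi (y0, x0)) _ _) _.
by rewrite distrC; apply: ltrD.
Qed.

Section IntegralCompactSupport.
Context {R : realType} {T : ptopologicalType} (mu : {measure set (borel T) -> \bar R}).
Hypothesis hausT : hausdorff_space T.

Lemma integrable_continuous_compact {h : T -> R} {L : set T} :
  continuous h -> compact L -> (mu L < +oo)%E ->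
  mu.-integrable (L : set (borel T)) (EFin \o (h : borel T -> R)).
Proof.
move=> ch cL muL; apply: measurable_bounded_integrable => //.
- exact: compact_measurable_borel.
- apply: (measurable_funS measurableT) => //; exact: continuous_measurable_borel.
- have [M [Mr hM]] := compact_bounded (continuous_compact (continuous_subspaceT ch) cL).
  by exists M; split => // N MN y Ly; apply: (hM N MN); exists y.
Qed.

Lemma integrable_patch_continuous {h : T -> R} {L : set T} :
  continuous h -> compact L -> (mu L < +oo)%E ->
  mu.-integrable setT (fun y : borel T => ((h \_ L) y)%:E).
Proof.
move=> ch cL muL.
have := integrable_continuous_compact ch cL muL.
rewrite integrable_mkcond; last exact: compact_measurable_borel.
by apply: eq_integrable => // y _; rewrite !patchE; case: ifP.
Qed.

Lemma Rintegral_setT_supported {h : T -> R} {L : set T} :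
  (forall y, ~ L y -> h y = 0) ->
  Rintegral mu setT (h : borel T -> R) = Rintegral mu L (h : borel T -> R).
Proof.
move=> hL; rewrite [RHS]Rintegral_mkcond; apply: eq_Rintegral => y _ /=.
by rewrite patchE; case: ifPn => // /negP yL; rewrite hL // => Ly; apply/yL/mem_set.
Qed.

Lemma continuous_Rintegral_param {X : topologicalType} (Psi : T * X -> R)
    (L : set T) (x0 : X) :
  continuous Psi -> compact L -> (mu L < +oo)%E ->
  (\forall x \near x0, forall y, ~ L y -> Psi (y, x) = 0) ->
  {for x0, continuous (fun x => Rintegral mu setT (fun y : borel T => Psi (y, x)))}.
Proof.
move=> cPsi cL muL supp; apply/cvgrPdist_le => /= eps eps0.
have mL : measurable (L : set (borel T)) by exact: compact_measurable_borel.
set c := fine (mu L).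
have c0 : 0 <= c by apply/fine_ge0/measure_ge0.
have d0 : 0 < eps / (c + 1) by rewrite divr_gt0 // ltr_wpDl.
have dc : eps / (c + 1) * c <= eps.
  by rewrite mulrAC ler_pdivrMr ?ltr_wpDl // ler_pM2l // lerDl.
have supp0 := nbhs_singleton supp.
have := near_unif_compact_section _ _ x0 _ cPsi cL d0.
apply: filterS2 supp => x suppx Lx.
have Ix := integrable_continuous_compact (continuous_section x cPsi) cL muL.
have I0 := integrable_continuous_compact (continuous_section x0 cPsi) cL muL.
have IB : mu.-integrable (L : set (borel T))
    (EFin \o (fun y : borel T => Psi (y, x0) - Psi (y, x))).
  by apply: eq_integrable (integrableB mL I0 Ix) => //= y _; rewrite EFinB.
rewrite (Rintegral_setT_supported suppx) (Rintegral_setT_supported supp0).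
rewrite -RintegralB //; apply: le_trans (le_normr_Rintegral _ _) _ => //.
apply: le_trans dc; rewrite -Rintegral_cst //.
apply: le_Rintegral => //; first exact: integrable_norm.
- by apply: measurable_bounded_integrable => //; exact: bounded_cst.
- by move=> y Ly; apply/ltW/Lx.
Qed.

End IntegralCompactSupport.

Lemma negligible_bigcup_seq {d : measure_display} {T : ringOfSetsType d} {R : realFieldType}
    (mu : {content set T -> \bar R}) {I : choiceType} (s : seq I) (F : I -> set T) :
  (forall i, i \in s -> mu.-negligible (F i)) ->
  mu.-negligible (\bigcup_(i in [set` s]) F i).
Proof.
rewrite bigcup_seq; elim: s => [_|i s IH Fs].
  by rewrite big_nil; exact: negligible_set0.
rewrite big_cons; apply: negligibleU; first by apply: Fs; rewrite mem_head.
by apply: IH => j js; apply: Fs; rewrite in_cons js orbT.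
Qed.

Lemma ae_eq_continuous_at {R : realType} {T : ptopologicalType}
    (mu : {measure set (borel T) -> \bar R}) (a b : T -> R) (x0 : T) :
  (forall U : set T, open U -> U x0 -> (0 < mu U)%E) ->
  {ae mu, forall x : borel T, a x = b x} ->
  {for x0, continuous a} -> {for x0, continuous b} -> a x0 = b x0.
Proof.
move=> mu_pos [N [mN N0 abN]] ca cb; apply/eqP/negPn/negP => abx0.
have : \forall x \near x0, a x - b x != 0.
  by apply: (cvgr_neq0 (a x0 - b x0)); [exact: cvgB | rewrite subr_eq0].
rewrite /prop_near1 nbhsE; case=> O [oO Ox0] Oab.
have : (mu O <= mu N)%E.
  apply: le_measure; rewrite ?inE //; first exact: open_measurable_borel.
  by move=> x /Oab; rewrite subr_eq0 => /eqP abx; apply: abN.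
by rewrite N0 leNgt mu_pos.
Qed.

Section HaarMeasure.
Context {R : realType} {G : ptopologicalType} {mul : G -> G -> G} {inv : G -> G}
  {e : G} {mu : {measure set (borel G) -> \bar R}}.
Hypotheses (HG : is_lc_group mul inv e) (Hmu : is_left_Haar mul mu).

Let gG := lc_group_laws HG.

Lemma continuous_mull (c : G) : continuous (mul c).
Proof.
case: HG => _ [_ [_ [cM _]]] x.
exact: (@continuous2_cvg _ _ _ _ _ _ (cst c) id mul c x (cM (c, x)) (cvg_cst _) cvg_id).
Qed.

Lemma Haar_open_gt0 (W : set G) : open W -> W !=set0 -> (0 < mu W)%E.
Proof.
(* If mu W = 0, each compact set is covered by finitely many null translates of
   W, so inner regularity makes every open set null. *)
move=> oW [w0 Ww0].
case: Hmu => [mu_inv [_ [_ [mu_inner [U [oU muU]]]]]].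
have hausG : hausdorff_space G by case: HG => _ [_ [_ [_ [_ []]]]].
rewrite lt0e measure_ge0 andbT; apply/eqP => muW0.
move: muU; rewrite mu_inner // ltNge => /negP; apply; apply: ge_ereal_sup.
move=> _ [C [cC _] <-].
pose tr c := [set mul c a | a in W].
have trE c : tr c = mul (inv c) @^-1` W.
  apply/seteqP; split => [x [a Wa <-]|x Wx] /=; first by rewrite (grp_mulKg gG).
  by exists (mul (inv c) x); rewrite // (grp_mulKVg gG).
have tr_open c : open (tr c).
  by rewrite trE; apply: open_comp oW => x _; exact: continuous_mull.
have tr_null c : mu.-negligible (tr c : set (borel G)).
  apply/negligibleP; first exact: open_measurable_borel.
  by rewrite -muW0; apply: mu_inv; exact: open_measurable_borel.
have [D _ CD] : finite_subset_cover [set: G] tr C.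
  move: cC; rewrite compact_cover; apply => // x _.
  by exists (mul x (inv w0)) => //; exists w0; rewrite // (grp_mulgVK gG).
have C_null : mu.-negligible (C : set (borel G)).
  move: (negligible_bigcup_seq mu (finmap.enum_fset D) tr (fun c _ => tr_null c)).
  exact: negligibleS.
by rewrite (measure_negligible (compact_measurable_borel _ hausG cC) C_null).
Qed.

End HaarMeasure.

Local Open Scope complex_scope.

Lemma Re_Cintegral {R : realType} {T : ptopologicalType}
    (mu : {measure set (borel T) -> \bar R}) (h : T -> R[i]) :
  complex.Re (Cintegral mu h) = Rintegral mu setT (fun x : borel T => complex.Re (h x)).
Proof. by rewrite /Cintegral /=; ring. Qed.

Lemma normc_real (R : rcfType) (r : R) : Normc.normc r%:C = `|r|.
Proof. by rewrite /Normc.normc /= expr0n addr0 sqrtr_sqr. Qed.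

Section WeightedConvolution.
Context {R : realType} {G : ptopologicalType} {mul : G -> G -> G} {inv : G -> G}
  {e : G} {mu : {measure set (borel G) -> \bar R}} {K : set G} {w : G -> R}.
Hypotheses (HG : is_lc_group mul inv e) (Hmu : is_left_Haar mul mu)
  (HK : is_compact_subgroup mul inv e K) (Hw : is_weight w).

Let gG := lc_group_laws HG.
Let hausG : hausdorff_space G. Proof. by case: HG => _ [_ [_ [_ [_ []]]]]. Qed.
Let mu_compact {C : set G} : compact C -> (mu C < +oo)%E.
Proof. by case: Hmu => _ [+ _]; apply. Qed.
Let w_gt0 x : 0 < w x. Proof. by case: Hw => _; apply. Qed.

Let setM (A B : set G) := [set mul a b | a in A & b in B].

Let kernel (q : G * G) : R := w q.1 * w (mul (inv q.1) q.2) / w q.2.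

Lemma compact_setM (A B : set G) : compact A -> compact B -> compact (setM A B).
Proof.
case: HG => _ [_ [_ [cM _]]] cA cB; rewrite /setM image2E.
have -> : uncurry mul = (fun p : G * G => mul p.1 p.2) by apply/funext => -[].
exact: continuous_compact (continuous_subspaceT cM) (compact_setX cA cB).
Qed.

Lemma biinvariant_setE {A : set G} :
  (forall x k1 k2, K k1 -> K k2 -> A x -> A (mul k1 (mul x k2))) ->
  forall x k1 k2, K k1 -> K k2 -> A (mul k1 (mul x k2)) = A x.
Proof.
case: HK => _ [_ [_ KV]] AK x k1 k2 K1 K2; apply/propext; split; last exact: AK.
move=> /(AK _ _ _ (KV _ K1) (KV _ K2)).
by rewrite -(grp_mulA gG) (grp_mulKg gG) (grp_mulgK gG).
Qed.

Lemma biinvariant_compact_envelope {S V : set G} : compact S -> compact V -> V e ->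
  exists Om : set G, [/\ compact Om,
    (forall x k1 k2, K k1 -> K k2 -> Om x -> Om (mul k1 (mul x k2))),
    S `<=` Om,
    (forall x y, V x -> S y -> Om (mul (inv y) x)) &
    (forall x y, V x -> S (mul (inv y) x) -> Om y)].
Proof.
move=> cS cV Ve; case: HK => cK [Ke [KM _]].
have cI : continuous inv by case: HG => _ [_ [_ [_ []]]].
pose M := S `|` inv @` S `|` V.
have cM : compact M.
  apply: compactU => //; apply: compactU => //.
  exact: continuous_compact (continuous_subspaceT cI) cS.
exists (setM K (setM (setM M M) K)).
have OmM a b : M a -> M b -> setM K (setM (setM M M) K) (mul a b).
  move=> Ma Mb; exists e => //; exists (mul (mul a b) e).
    by exists (mul a b); [exists a => //; exists b | exists e].
  by rewrite (grp_mul1g gG) (grp_mulg1 gG).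
split.
- by apply: compact_setM => //; apply: compact_setM => //; exact: compact_setM.
- move=> x k1 k2 K1 K2 [k Kk [y [m MMm [k' Kk' <-]] <-]].
  exists (mul k1 k); first exact: KM.
  exists (mul m (mul k' k2)); first by exists m => //; exists (mul k' k2) => //; exact: KM.
  by rewrite !(grp_mulA gG).
- by move=> y Sy; rewrite -(grp_mulg1 gG y); apply: OmM; [left; left|right].
- by move=> x y Vx Sy; apply: OmM; [left; right; exists y|right].
- move=> x y Vx Syx.
  have MyxV : M (inv (mul (inv y) x)) by left; right; exists (mul (inv y) x).
  have := OmM _ _ (or_intror Vx : M x) MyxV.
  by rewrite (grp_invMg gG) (grp_invgK gG) (grp_mulKVg gG).
Qed.

Lemma in_L1w_biinv_real (h : G -> R) :
  measurable_fun setT (h : borel G -> R) -> bi_invariant mul K h ->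
  mu.-integrable setT (fun x : borel G => (h x * w x)%:E) ->
  in_L1w_biinv mu mul K w (fun x => (h x)%:C).
Proof.
move=> mh hK /integrableP[_ hw]; split; first exact: mh.
split; first exact: measurable_cst.
split; first by move=> x k1 k2 K1 K2; rewrite hK.
apply: le_lt_trans hw; rewrite le_eqVlt; apply/orP; left; apply/eqP.
by apply: eq_integral => x _; rewrite normc_real /= normrM (gtr0_norm (w_gt0 x)).
Qed.

Lemma in_L1w_continuous (u : G -> R) (S : set G) :
  continuous u -> compact S -> (forall x, ~ S x -> u x = 0) -> bi_invariant mul K u ->
  in_L1w_biinv mu mul K w (fun x => (u x)%:C).
Proof.
move=> cu cS uS uK; apply: in_L1w_biinv_real => //.
  exact: continuous_measurable_borel.
have cuw : continuous (fun x => u x * w x).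
  by case: Hw => cw _ x; apply: cvgM; [exact: cu | exact: cw].
move: (integrable_patch_continuous mu hausG cuw cS (mu_compact cS)).
apply: eq_integrable => // x _ /=; rewrite patchE; case: ifPn => // /negP xS.
by rewrite uS ?mul0r // => Sx; apply/xS/mem_set.
Qed.

Lemma in_L1w_indicator (A : set G) : compact A ->
  (forall x k1 k2, K k1 -> K k2 -> A x -> A (mul k1 (mul x k2))) ->
  in_L1w_biinv mu mul K w (fun x => (\1_A x)%:C).
Proof.
move=> cA AK; apply: in_L1w_biinv_real.
- by apply: measurable_realfun.measurable_indic; exact: compact_measurable_borel.
- move=> x k1 k2 K1 K2; rewrite !indicE.
  have AE := biinvariant_setE AK x k1 k2 K1 K2.
  suff -> : (mul k1 (mul x k2) \in A) = (x \in A) by [].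
  by apply/idP/idP => /set_mem Ax; apply/mem_set; [rewrite -AE | rewrite AE].
- have cw : continuous w by case: Hw.
  move: (integrable_patch_continuous mu hausG cw cA (mu_compact cA)).
  apply: eq_integrable => // x _ /=.
  by rewrite patchE indicE; case: ifPn; rewrite ?mul1r ?mul0r.
Qed.

Lemma continuous_mulVl : continuous (fun q : G * G => mul (inv q.1) q.2).
Proof.
case: HG => _ [_ [_ [cM [cI _]]]] q.
apply: (@continuous2_cvg _ _ _ _ _ _ (fun q : G * G => inv q.1) snd mul _ _
  (cM (inv q.1, q.2))).
  exact: continuous_comp (continuous_fst q) (cI _).
exact: (continuous_snd q).
Qed.

Lemma continuous_kernel : continuous kernel.
Proof.
case: Hw => cw _ q; apply: cvgM; first apply: cvgM.
- exact: continuous_comp (continuous_fst q) (cw _).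
- exact: continuous_comp (continuous_mulVl q) (cw _).
- by apply: cvgV; [rewrite gt_eqF | exact: continuous_comp (continuous_snd q) (cw _)].
Qed.

Lemma continuous_Rintegral_kernel (Phi : G * G -> R) (Om : set G) (x0 : G) :
  continuous Phi -> compact Om ->
  (\forall x \near x0, forall y, ~ Om y -> Phi (y, x) = 0) ->
  {for x0, continuous (fun x =>
    Rintegral mu setT (fun y : borel G => Phi (y, x) * kernel (y, x)))}.
Proof.
move=> cPhi cOm supp.
have cPsi : continuous (fun q => Phi q * kernel q).
  by move=> q; apply: cvgM; [exact: cPhi | exact: continuous_kernel].
apply: (continuous_Rintegral_param mu hausG _ _ _ cPsi cOm (mu_compact cOm)).
by apply: filterS supp => x Phi0 y /Phi0 ->; rewrite mul0r.
Qed.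

Lemma Re_wconv_real (f g : G -> R) x :
  complex.Re (wconv mu mul inv w (fun y => (f y)%:C) (fun y => (g y)%:C) x) =
  Rintegral mu setT (fun y : borel G => f y * g (mul (inv y) x) * kernel (y, x)).
Proof.
by rewrite /wconv Re_Cintegral; apply: eq_Rintegral => y _ /=; rewrite /kernel /=; ring.
Qed.

Lemma Re_wconv_indicator_r (u : G -> R) (S Om : set G) x :
  (forall y, ~ S y -> u y = 0) -> (forall y, S y -> Om (mul (inv y) x)) ->
  complex.Re (wconv mu mul inv w (fun y => (u y)%:C) (fun y => (\1_Om y)%:C) x) =
  Rintegral mu setT (fun y : borel G => u y * kernel (y, x)).
Proof.
move=> uS SOm; rewrite Re_wconv_real; apply: eq_Rintegral => y _.
have [Sy|/uS ->] := pselect (S y); last by rewrite !mul0r.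
by rewrite indicE mem_set ?mulr1 //; exact: SOm.
Qed.

Lemma Re_wconv_indicator_l (u : G -> R) (S Om : set G) x :
  (forall y, ~ S y -> u y = 0) -> (forall y, S (mul (inv y) x) -> Om y) ->
  complex.Re (wconv mu mul inv w (fun y => (\1_Om y)%:C) (fun y => (u y)%:C) x) =
  Rintegral mu setT (fun y : borel G => u (mul (inv y) x) * kernel (y, x)).
Proof.
move=> uS SOm; rewrite Re_wconv_real; apply: eq_Rintegral => y _.
have [Sy|/uS ->] := pselect (S (mul (inv y) x)); last by rewrite mulr0 !mul0r.
by rewrite indicE mem_set ?mul1r //; exact: SOm.
Qed.

Lemma weighted_Gelfand_Rintegral_inv {u : G -> R} :
  w e = 1 -> weighted_Gelfand_pair mu mul inv K w ->
  continuous u -> (exists S : set G, compact S /\ forall x, ~ S x -> u x = 0) ->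
  bi_invariant mul K u ->
  Rintegral mu setT (fun x : borel G => u x * (w x * w (inv x))) =
  Rintegral mu setT (fun x : borel G => u (inv x) * (w (inv x) * w x)).
Proof.
move=> we1 HGP cu [S [cS uS]] uK.
have [V eV [cV _]] : exists2 V, nbhs e V & compact V /\ closed V.
  by case: HG => _ [_ [_ [_ [_ [_ /(_ e I)]]]]]; rewrite withinET.
have [Om [cOm OmK SOm OmL OmR]] := biinvariant_compact_envelope cS cV (nbhs_singleton eV).
pose f y : R[i] := (u y)%:C; pose g y : R[i] := (\1_Om y : R)%:C.
pose conv_l x := Rintegral mu setT (fun y : borel G => u y * kernel (y, x)).
pose conv_r x := Rintegral mu setT (fun y : borel G => u (mul (inv y) x) * kernel (y, x)).
have fg_near : \forall x \near e, complex.Re (wconv mu mul inv w f g x) = conv_l x.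
  by apply: filterS eV => x Vx; apply: Re_wconv_indicator_r uS _ => y; exact: OmL.
have gf_near : \forall x \near e, complex.Re (wconv mu mul inv w g f x) = conv_r x.
  by apply: filterS eV => x Vx; apply: Re_wconv_indicator_l uS _ => y; exact: OmR.
have c_l : {for e, continuous conv_l}.
  apply: (continuous_Rintegral_kernel (fun q => u q.1)) cOm _.
    by move=> q; exact: continuous_comp (continuous_fst q) (cu _).
  by apply: nearW => x y Omy /=; apply: uS => /SOm.
have c_r : {for e, continuous conv_r}.
  apply: (continuous_Rintegral_kernel (fun q => u (mul (inv q.1) q.2))) cOm _.
    by move=> q; exact: continuous_comp (continuous_mulVl q) (cu _).
  by apply: filterS eV => x Vx y Omy /=; apply: uS => /(OmR _ _ Vx).
have ae_fg : {ae mu, forall x : borel G, complex.Re (wconv mu mul inv w f g x) =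
    complex.Re (wconv mu mul inv w g f x)}.
  apply: filterS (HGP f g _ _) => [x -> //||].
  - exact: in_L1w_continuous cu cS uS uK.
  - exact: in_L1w_indicator.
have := ae_eq_continuous_at mu _ _ e
  (fun U oU Ue => Haar_open_gt0 HG Hmu _ oU (ex_intro _ e Ue)) ae_fg
  (near_eq_continuous_at fg_near c_l) (near_eq_continuous_at gf_near c_r).
rewrite (nbhs_singleton fg_near) (nbhs_singleton gf_near) /conv_l /conv_r => conv_e.
transitivity (Rintegral mu setT (fun y : borel G => u y * kernel (y, e))).
  by apply: eq_Rintegral => y _; rewrite /kernel /= (grp_mulg1 gG) we1 divr1.
rewrite conv_e; apply: eq_Rintegral => y _.
by rewrite /kernel /= (grp_mulg1 gG) we1 divr1 [w y * _]mulrC.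
Qed.

End WeightedConvolution.

Theorem mainTheorem7 (R : realType) (G : ptopologicalType)
  (mul : G -> G -> G) (inv : G -> G) (e : G)
  (mu : {measure set (borel G) -> \bar R}) (K : set G) (w : G -> R) :
  is_lc_group mul inv e ->
  is_left_Haar mul mu ->
  is_compact_subgroup mul inv e K ->
  is_weight w -> bi_invariant mul K w -> w e = 1 ->
  weighted_Gelfand_pair mu mul inv K w ->
  forall f : G -> R[i], in_Cc_biinv mul K f ->
  Cintegral mu (fun x => f x * (w x * w (inv x))%:C) =
  Cintegral mu (fun x => f (inv x) * (w (inv x) * w x)%:C).
Proof.
move=> HG Hmu HK Hw _ we1 HGP f [cRe [cIm [[C [cC fC]] fK]]].
have part_eq (p : R[i] -> R) : (forall z r, p (z * r%:C) = p z * r) ->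
    continuous (p \o f) -> p 0 = 0 ->
    Rintegral mu setT (fun x : borel G => p (f x * (w x * w (inv x))%:C)) =
    Rintegral mu setT (fun x : borel G => p (f (inv x) * (w (inv x) * w x)%:C)).
  move=> pM cp p0; under eq_Rintegral do rewrite pM.
  rewrite (weighted_Gelfand_Rintegral_inv HG Hmu HK Hw we1 HGP cp).
  - by under [RHS]eq_Rintegral do rewrite pM.
  - by exists C; split => // x /fC /= ->.
  - by move=> x k1 k2 K1 K2 /=; rewrite fK.
by rewrite /Cintegral !part_eq // => -[a b] r /=; ring.
Qed.
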